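(* Let $G$ be a finite abelian group, let $\rho\in[2,\operatorname{diam}^+(G)]$, and let $A$ be a $\rho$-maximal subset of $G$. Then $\pi(A)=\pi(\langle A\rangle^+_\tau)$ for every $\tau\in[1,\rho-1]$.
   Context: Groups are written additively. For $A\subseteq G$ let $A_0:=A\cup\{0\}$ and $\langle A\rangle^+_\tau:=\tau A_0=\{a_1+\dots+a_\tau:a_i\in A_0\}$. $\operatorname{diam}^+_A(G):=\min\{\rho\in\mathbb{N}_0:\langle A\rangle^+_\rho=G\}$ ($\min\varnothing=\infty$); $\operatorname{diam}^+(G):=\max\{\operatorname{diam}^+_A(G):\langle A\rangle=G\}$. The period of $S\subseteq G$ is $\pi(S):=\{g\in G:S+g=S\}$. A subset $A\subseteq G$ is $\rho$-maximal if it is maximal under inclusion subject to $\operatorname{diam}^+_A(G)\ge\rho$, i.e. subject to $\langle A\rangle^+_{\rho-1}\neq G$. *)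

From HB Require Import structures.
From mathcomp Require Import all_boot all_order all_algebra.
From Stdlib Require Import ClassicalDescription.
Set Implicit Arguments. Unset Strict Implicit. Unset Printing Implicit Defensive.
Import GRing.Theory.
Local Open Scope ring_scope.

Section Defs.
Variable G : finZmodType.

Definition sumset (A B : {set G}) : {set G} := [set a + b | a in A, b in B].

Definition A0 (A : {set G}) : {set G} := A :|: [set 0].

Definition hsum (tau : nat) (A : {set G}) : {set G} :=
  iter tau (sumset (A0 A)) [set 0].

Definition zspan (A : {set G}) : {set G} :=
  \bigcap_(B : {set G} | [&& A \subset B, 0 \in B &
            [forall x in B, forall y in B, x - y \in B]]) B.

(* Extended naturals: None = infinity. *)
Definition ext_le (r : nat) (d : option nat) : bool :=
  if d is Some n then (r <= n)%N else true.

Definition emax (d e : option nat) : option nat :=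
  match d, e with
  | Some m, Some n => Some (maxn m n)
  | _, _ => None
  end.

Definition diamA (A : {set G}) : option nat :=
  match excluded_middle_informative (exists r, hsum r A == setT) with
  | left H => Some (ex_minn H)
  | right _ => None
  end.

Definition diam_plus : option nat :=
  \big[emax/Some 0%N]_(A : {set G} | zspan A == setT) diamA A.

Definition period (S : {set G}) : {set G} :=
  [set g | [set x + g | x in S] == S].

Definition rho_maximal (rho : nat) (A : {set G}) : bool :=
  maxset (fun B : {set G} => ext_le rho (diamA B)) A.

End Defs.

(* Let H be the period of S := <A>^+_(rho-1).  Enlarging A to B := A_0 + H
   does not enlarge S, since <B>^+_(rho-1) lies in S + H = S; by maximality B = A.
   Hence 0 is in A and H is contained in pi(A).  Conversely, since 0 is in A,
   pi(A) is contained in pi(<A>^+_tau), which in turn is contained in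
   pi(<A>^+_(rho-1)) = H for tau <= rho - 1. *)

From HB Require Import structures.
From mathcomp Require Import all_boot all_order all_algebra.
From Stdlib Require Import ClassicalDescription.
Set Implicit Arguments. Unset Strict Implicit. Unset Printing Implicit Defensive.
Import GRing.Theory.
Local Open Scope ring_scope.

Section Sumsets.
Variable G : finZmodType.
Implicit Types A B S : {set G}.

Lemma sumsetP A B x :
  reflect (exists2 a, a \in A & exists2 b, b \in B & x = a + b) (x \in sumset A B).
Proof.
apply: (iffP imset2P) => [[a b Ha Hb ->] | [a Ha [b Hb ->]]]; last by exists a b.
by exists a => //; exists b.
Qed.

Lemma mem_sumset A B a b : a \in A -> b \in B -> a + b \in sumset A B.
Proof. by move=> Ha Hb; apply/sumsetP; exists a => //; exists b. Qed.

Lemma mem0_A0 A : 0 \in A0 A.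
Proof. by rewrite !inE eqxx orbT. Qed.

Lemma hsumS n A : hsum n.+1 A = sumset (A0 A) (hsum n A).
Proof. by rewrite /hsum iterS. Qed.

Lemma hsum_mono m n A : (m <= n)%N -> hsum m A \subset hsum n A.
Proof.
move=> /subnKC <-; elim: (n - m)%N => [|k IH]; first by rewrite addn0.
apply: subset_trans IH _; apply/subsetP => x Hx.
by rewrite addnS hsumS -[x]add0r mem_sumset ?mem0_A0.
Qed.

Lemma periodP S g : reflect {in S, forall x, x + g \in S} (g \in period S).
Proof.
rewrite inE; apply: (iffP eqP) => [E x Hx | Hg]; first by rewrite -E; apply: imset_f.
apply/eqP; rewrite eqEcard card_imset; last exact: addIr.
by rewrite leqnn andbT; apply/subsetP => _ /imsetP [x Hx ->]; apply: Hg.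
Qed.

Lemma period0 S : 0 \in period S.
Proof. by apply/periodP => x; rewrite addr0. Qed.

Lemma periodD S g h : g \in period S -> h \in period S -> g + h \in period S.
Proof. by move=> /periodP Hg /periodP Hh; apply/periodP => x /Hg /Hh; rewrite addrA. Qed.

Lemma period_period S : period S \subset period (period S).
Proof. by apply/subsetP => g Hg; apply/periodP => h /periodD; apply. Qed.

Lemma sumset_period S : sumset S (period S) = S.
Proof.
apply/eqP; rewrite eqEsubset; apply/andP; split.
  by apply/subsetP => _ /sumsetP [x Hx [g /periodP Hg ->]]; apply: Hg.
by apply/subsetP => x Hx; rewrite -[x]addr0 mem_sumset ?period0.
Qed.

Lemma period_sumsetl A B : period A \subset period (sumset A B).
Proof.
apply/subsetP => g /periodP Hg; apply/periodP => _ /sumsetP [a Ha [b Hb ->]].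
by rewrite addrAC mem_sumset ?Hg.
Qed.

Lemma period_sumsetr A B : period B \subset period (sumset A B).
Proof.
apply/subsetP => g /periodP Hg; apply/periodP => _ /sumsetP [a Ha [b Hb ->]].
by rewrite -addrA mem_sumset ?Hg.
Qed.

Lemma period_hsum_mono m n A :
  (m <= n)%N -> period (hsum m A) \subset period (hsum n A).
Proof.
move=> /subnKC <-; elim: (n - m)%N => [|k IH]; first by rewrite addn0.
by rewrite addnS hsumS; apply: subset_trans IH (period_sumsetr _ _).
Qed.

(* pi(S) is closed under addition, so n-fold sums from A_0 + pi(S) pick up
   only a single summand from pi(S). *)
Lemma hsum_sumset_period n A S :
  hsum n (sumset (A0 A) (period S)) \subset sumset (hsum n A) (period S).
Proof.
elim: n => [|n IH].
  by apply/subsetP => x /set1P ->; rewrite -[0]addr0 mem_sumset ?set11 ?period0.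
apply/subsetP => x; rewrite hsumS => /sumsetP [b Hb [y Hy ->]].
have [a Ha [g Hg ->]] : exists2 a, a \in A0 A & exists2 g, g \in period S & b = a + g.
  move: Hb; rewrite /A0 in_setU in_set1 => /orP [/sumsetP // | /eqP ->].
  by exists 0; rewrite ?mem0_A0 //; exists 0; rewrite ?period0 ?addr0.
move/subsetP: IH => /(_ _ Hy) /sumsetP [t Ht [h Hh ->]].
by rewrite addrACA hsumS mem_sumset ?mem_sumset ?periodD.
Qed.

Lemma ext_le_diamA rho A :
  (0 < rho)%N -> ext_le rho (diamA A) = (hsum rho.-1 A != setT).
Proof.
case: rho => // r _; rewrite /diamA; case: excluded_middle_informative => [ex | noex] /=.
  case: ex_minnP => m /eqP full_m min_m; rewrite ltnNge; congr negb.
  apply/idP/idP => [le_mr | /min_m //].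
  by rewrite eqEsubset subsetT -full_m hsum_mono.
by apply/esym/negP => /eqP full_r; apply: noex; exists r; rewrite full_r.
Qed.

Lemma rho_maximal_sumset_period rho A :
  (0 < rho)%N -> rho_maximal rho A ->
  sumset (A0 A) (period (hsum rho.-1 A)) = A.
Proof.
move=> rho_gt0 /maxsetP [diamA_ge max_A]; apply: max_A.
  rewrite /= !ext_le_diamA // in diamA_ge *; apply: contra diamA_ge => /eqP fullB.
  rewrite eqEsubset subsetT -fullB /=.
  by apply: subset_trans (hsum_sumset_period _ _ _) _; rewrite sumset_period.
by apply/subsetP => a Ha; rewrite -[a]addr0 mem_sumset ?period0 // inE Ha.
Qed.

End Sumsets.

(* The hypothesis on diam^+(G) only guarantees that rho-maximal sets exist. *)
Theorem lemma5p1 (G : finZmodType) (rho : nat) (A : {set G}) :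
  (2 <= rho)%N -> ext_le rho (diam_plus G) ->
  rho_maximal rho A ->
  forall tau : nat, (1 <= tau <= rho.-1)%N ->
  period A = period (hsum tau A).
Proof.
move=> rho_ge2 _ max_A tau /andP [tau_gt0 tau_le].
have rho_gt0 : (0 < rho)%N := ltnW rho_ge2.
have defA := rho_maximal_sumset_period rho_gt0 max_A.
have A0_A : A0 A = A.
  by apply/setUidPl; rewrite sub1set -defA -[0]addr0 mem_sumset ?mem0_A0 ?period0.
apply/eqP; rewrite eqEsubset; apply/andP; split.
  by rewrite -(prednK tau_gt0) hsumS A0_A period_sumsetl.
rewrite -{2}defA; apply: subset_trans (period_hsum_mono A tau_le) _.
by apply: subset_trans (period_period _) (period_sumsetr _ _).
Qed.
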